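(* Let $\mathbf V$ be a monoid variety satisfying $xtx\approx xtx^2$. If $\mathbf V$ contains $\mathbb M_\lambda(ata^+)$ but does not contain $\mathbf K=\mathbb M_\lambda(bta^+b^+)$, then $\mathbf V$ satisfies $xty^2x\approx xty^2xyx$.
   Context: Words are elements of the free monoid $\mathfrak A^*$ over a countably infinite alphabet. Let $\tau_1$ be the congruence on $\mathfrak A^*$ generated by $a=aa$ for all letters $a$. Define $\mathbf u\,\lambda\,\mathbf v$ iff $\mathbf u\,\tau_1\,\mathbf v$, $\mathbf u,\mathbf v$ have the same set of multiple (occurring at least twice) letters, and for each multiple letter its first two occurrences are adjacent in $\mathbf u$ iff they are adjacent in $\mathbf v$. For $\lambda$-classes, $\mathtt v\le\mathtt u$ iff $\mathtt u=\mathtt p\mathtt v\mathtt s$ in $\mathfrak A^*/\lambda$. For a set $\mathtt W$ of $\lambda$-classes, $M_\lambda(\mathtt W)$ is the Rees quotient of $\mathfrak A^*/\lambda$ by the ideal of classes not $\le$ any element of $\mathtt W$, and $\mathbb M_\lambda(\mathtt W)$ is the monoid variety it generates. Here $ata^+$ denotes the $\lambda$-class $\{ata^k:k\ge1\}$ and $bta^+b^+$ denotes the $\lambda$-class $\{bta^kb^m:k\ge2,m\ge1\}$. *)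

From mathcomp Require Import all_boot.
Set Implicit Arguments. Unset Strict Implicit. Unset Printing Implicit Defensive.

Definition word := seq nat.
Definition identity := (word * word)%type.

Inductive tau1 : word -> word -> Prop :=
| tau1_refl u : tau1 u u
| tau1_sym u v : tau1 u v -> tau1 v u
| tau1_trans u v w : tau1 u v -> tau1 v w -> tau1 u w
| tau1_step (p s : word) (a : nat) : tau1 (p ++ a :: s) (p ++ a :: a :: s).

Definition multiple (w : word) (a : nat) : bool := 1 < count_mem a w.

(* the first two occurrences of a in w are adjacent (meaningful when a is
   multiple in w): the letter right after the first occurrence of a is a. *)
Definition first_two_adj (w : word) (a : nat) : bool :=
  nth a.+1 w (index a w).+1 == a.

Definition lam (u v : word) : Prop :=
  [/\ tau1 u v,
      (forall a, multiple u a = multiple v a) &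
      (forall a, multiple u a -> first_two_adj u a = first_two_adj v a)].

Definition lam_le (v u : word) : Prop :=
  exists p s : word, lam u (p ++ v ++ s).

(* A set W of lambda-classes is given by a list of representative words.
   [allowed W w]: the class of w is <= some element of W, i.e. it is not in
   the ideal factored out in the Rees quotient M_lambda(W). *)
Definition allowed (W : seq word) (w : word) : Prop :=
  exists2 x, x \in W & lam_le w x.

(* Substitutions into M_lambda(W): a letter is sent either to the zero
   (None) or to (the class of) a word (Some w).  The value of a word u
   under sigma is zero iff some letter of u goes to zero or the product
   word img sigma u is not allowed; otherwise it is the class of that word. *)
Definition img (sigma : nat -> option word) (u : word) : word :=
  flatten [seq odflt [::] (sigma x) | x <- u].

Definition nonzero (W : seq word) (sigma : nat -> option word) (u : word) : Prop :=
  (forall x, x \in u -> sigma x <> None) /\ allowed W (img sigma u).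

Definition Mlam_sat (W : seq word) (e : identity) : Prop :=
  forall sigma : nat -> option word,
    (~ nonzero W sigma e.1 /\ ~ nonzero W sigma e.2) \/
    [/\ nonzero W sigma e.1, nonzero W sigma e.2 & lam (img sigma e.1) (img sigma e.2)].

Record monoid := Monoid {
  mcarrier :> Type;
  mop : mcarrier -> mcarrier -> mcarrier;
  munit : mcarrier;
  mopA : forall x y z, mop x (mop y z) = mop (mop x y) z;
  mop1m : forall x, mop munit x = x;
  mopm1 : forall x, mop x munit = x }.

Definition meval (M : monoid) (sigma : nat -> M) (u : word) : M :=
  foldr (fun x acc => mop (sigma x) acc) (munit M) u.

Definition msat (M : monoid) (e : identity) : Prop :=
  forall sigma : nat -> M, meval sigma e.1 = meval sigma e.2.

(* A monoid variety V is represented as the class of all monoids satisfying a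
   set Sigma of identities (Birkhoff).  *)
Definition Vsat (Sigma : identity -> Prop) (e : identity) : Prop :=
  forall M : monoid, (forall f, Sigma f -> msat M f) -> msat M e.

Definition Vcontains_Mlam (Sigma : identity -> Prop) (W : seq word) : Prop :=
  forall f, Sigma f -> Mlam_sat W f.

From mathcomp Require Import all_boot zify.
From Stdlib Require Import Classical.
Set Implicit Arguments. Unset Strict Implicit. Unset Printing Implicit Defensive.

(* Letters x, t, y are encoded as 0, 1, 2.
   Since K is not in V, some identity u ≈ v of V fails in K under an assignment
   giving u a nonzero value u', i.e. p u' s = x t y^k x^m with k ≥ 2, m ≥ 1;
   let v' be the value of v.  As M_λ(xtx) is in V, u ≈ v still holds in it after
   composing with the assignments onto x^* and t x^*: so u' and v' have the same
   letters with the same multiplicities up to 2, and the same letters before t,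
   whence p v' s = x t z for a word z in x, y.  If z has no factor xy, then
   z = y^a x^b and the assignment does not witness a failure after all.
   Otherwise V satisfies x t y² x ≈ x t z, and xtx ≈ xtx², which squares or
   unsquares letters occurring earlier, gives
   x t y² x ≈ x t y² z x ≈ x t y (yx)^n ≈ x t y (yx)² with n ≥ 2. *)

(** * The congruence τ1 *)

Fixpoint tau1_nf (w : word) : word :=
  if w is a :: s then
    (let r := tau1_nf s in if ohead r == Some a then r else a :: r)
  else [::].

Lemma ohead_tau1_nf w : ohead (tau1_nf w) = ohead w.
Proof. by case: w => [|a s] //=; case: eqP => //= ->. Qed.

Lemma tau1_nf_dup p a s : tau1_nf (p ++ a :: a :: s) = tau1_nf (p ++ a :: s).
Proof.
elim: p => [|b p /= -> //].
by have /= := ohead_tau1_nf (a :: s); rewrite /= => ->; rewrite eqxx.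
Qed.

Lemma tau1_ctx p s u v : tau1 u v -> tau1 (p ++ u ++ s) (p ++ v ++ s).
Proof.
elim=> [w|u' v' _ IH|u' v' w' _ IH1 _ IH2|q r a].
- exact: tau1_refl.
- exact: tau1_sym IH.
- exact: tau1_trans IH1 IH2.
- by rewrite -!catA /= !catA; apply: tau1_step.
Qed.

Lemma tau1_cons a u v : tau1 u v -> tau1 (a :: u) (a :: v).
Proof. by move/(tau1_ctx [:: a] [::]); rewrite !cats0. Qed.

Lemma tau1_tau1_nf w : tau1 w (tau1_nf w).
Proof.
elim: w => [|a s IH] /=; first exact: tau1_refl.
apply: tau1_trans (tau1_cons a IH) _; case: eqP => [|_]; last exact: tau1_refl.
case: (tau1_nf s) => [|b r] //= [->].
exact: tau1_sym (tau1_step [::] r _).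
Qed.

Lemma tau1P u v : tau1 u v <-> tau1_nf u = tau1_nf v.
Proof.
split; last first.
  move=> E; apply: tau1_trans (tau1_tau1_nf u) _.
  by rewrite E; apply/tau1_sym/tau1_tau1_nf.
by elim=> [// | ? ? _ -> | ? ? ? _ -> _ -> | p s a]; rewrite ?tau1_nf_dup.
Qed.

Lemma tau1_ohead u v : tau1 u v -> ohead u = ohead v.
Proof. by move/tau1P => E; rewrite -ohead_tau1_nf E ohead_tau1_nf. Qed.

Lemma mem_tau1_nf w : tau1_nf w =i w.
Proof.
elim: w => [|a s IH] c //=; case: eqP => [|_]; last by rewrite !in_cons IH.
rewrite in_cons -IH; case: (tau1_nf s) => //= b r [->].
by rewrite in_cons; case: eqP.
Qed.

Lemma tau1_mem u v : tau1 u v -> u =i v.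
Proof. by move/tau1P => E c; rewrite -mem_tau1_nf E mem_tau1_nf. Qed.

Lemma tau1_nseq a n w : tau1 (nseq n.+1 a ++ w) (a :: w).
Proof.
elim: n => [|n IH]; first exact: tau1_refl.
exact/(tau1_trans _ IH)/tau1_sym/(tau1_step [::] (nseq n a ++ w) a).
Qed.

Lemma tau1_nf_nil w : tau1_nf w = [::] -> w = [::].
Proof. by case: w => //= a s; case: eqP => //; case: (tau1_nf s). Qed.

Lemma tau1_nf_cons w a r : tau1_nf w = a :: r ->
  exists n w', w = nseq n.+1 a ++ w' /\ tau1_nf w' = r.
Proof.
elim: w a r => [|b s IH] a r //=; case: eqP => [Hs Er | _ [<- <-]]; last by exists 0, s.
rewrite Er in Hs; case: Hs => <-.
by have [n [w' [-> <-]]] := IH _ _ Er; exists n.+1, w'.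
Qed.

Lemma tau1_alternate a b w : all (mem [:: a; b]) w ->
  exists n, tau1 (a :: w ++ [:: b]) (flatten (nseq n.+1 [:: a; b])).
Proof.
have step u v : tau1 u v -> (exists n, tau1 v (flatten (nseq n.+1 [:: a; b]))) ->
    exists n, tau1 u (flatten (nseq n.+1 [:: a; b])).
  by move=> Huv [n Hv]; exists n; apply: tau1_trans Hv.
have [N] := ubnP (size w); elim: N w => // N IH [|c w] Hsz.
  by exists 0; apply: tau1_refl.
case/andP; rewrite !inE => /orP [] /eqP -> Hw.
  by apply: (step _ (a :: w ++ [:: b])); [apply/tau1_sym/(tau1_step [::]) | apply: IH].
case: w Hsz Hw => [|d w] Hsz; first by exists 0; apply/tau1_sym/(tau1_step [:: a] [::]).
case/andP; rewrite !inE => /orP [] /eqP -> Hw.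
  have [n Hn] := IH w (ltnW Hsz) Hw; exists n.+1.
  by have := tau1_ctx [:: a; b] [::] Hn; rewrite !cats0.
apply: (step _ (a :: (b :: w) ++ [:: b])); first exact/tau1_sym/(tau1_step [:: a]).
by apply: IH; rewrite //= ?inE ?eqxx ?orbT.
Qed.

(** * The relation λ *)

Lemma lam_refl w : lam w w.
Proof. by split=> //; apply: tau1_refl. Qed.

Lemma lam_sym u v : lam u v -> lam v u.
Proof.
case=> Ht Hm Ha; split=> [|a|a]; first exact: tau1_sym.
- by rewrite Hm.
- by rewrite -Hm => /Ha ->.
Qed.

Lemma lam_trans u v w : lam u v -> lam v w -> lam u w.
Proof.
case=> Ht Hm Ha [Ht' Hm' Ha']; split=> [|a|a]; first exact: tau1_trans Ht'.
- by rewrite Hm Hm'.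
- by move=> Hu; rewrite Ha // Ha' // -Hm.
Qed.

Lemma lam_dup p a s : (a \in p) || (ohead s == Some a) ->
  lam (p ++ a :: s) (p ++ a :: a :: s).
Proof.
move=> Ha; split=> [|b|b _]; first exact: tau1_step.
- have : 0 < count_mem a p + count_mem a s.
    case/orP: Ha => [/count_memPn|]; first lia.
    by case: s => //= c s /eqP [->]; rewrite eqxx; lia.
  by rewrite /multiple !count_cat /=; case: eqP => [<-|_]; lia.
- rewrite /first_two_adj !index_cat; case: ifP => bp.
    have := index_mem b p; rewrite bp !nth_cat => ltp.
    by case: ltnP => // ?; have -> : (index b p).+1 - size p = 0 by lia.
  have big k : size p + k.+2 <= size p = false by lia.
  rewrite /= !nth_cat -!addnS !big !addKn.
  case: (eqVneq a b) => [eab|//]; subst b; rewrite bp /= in Ha.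
  by case: s Ha => //= c s /eqP [->].
Qed.

Lemma lam_nseq_collapse p s a k n : 0 < k -> (a \in p) || (1 < k) ->
  lam (p ++ nseq (k + n) a ++ s) (p ++ nseq k a ++ s).
Proof.
move=> k0 Hk; elim: n => [|n IH]; first by rewrite addn0; apply: lam_refl.
apply/(lam_trans _ IH)/lam_sym; rewrite addnS.
have [j Ej] : exists j, k + n = j.+1 by exists (k + n).-1; lia.
rewrite Ej; apply: lam_dup; case: j Ej => [|j] Ej; last by rewrite /= eqxx orbT.
have k1 : k = 1 by lia.
by rewrite k1 orbF in Hk; rewrite Hk.
Qed.

Lemma lam_cat_nseq p s a n n' : (n == 0) = (n' == 0) ->
  minn (count_mem a p + n) 2 = minn (count_mem a p + n') 2 ->
  lam (p ++ nseq n a ++ s) (p ++ nseq n' a ++ s).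
Proof.
move=> H0 H2; have [->|nn'] := eqVneq n n'; first exact: lam_refl.
pose k := if a \in p then 1 else 2.
have le_k j : j \in [:: n; n'] -> k <= j.
  rewrite /k; case: ifPn => [_|/count_memPn c0]; last rewrite c0 in H2.
    by rewrite !inE => /orP [] /eqP ->; lia.
  by rewrite !inE => /orP [] /eqP ->; lia.
have collapse j : j \in [:: n; n'] -> lam (p ++ nseq j a ++ s) (p ++ nseq k a ++ s).
  move=> /le_k kj; rewrite -(subnKC kj).
  by apply: lam_nseq_collapse; rewrite // /k; case: (a \in p).
by apply: lam_trans (collapse _ _) (lam_sym (collapse _ _)); rewrite !inE eqxx ?orbT.
Qed.

Definition blocks (c d : nat) : word := nseq c 2 ++ nseq d 0.

Lemma lam_blocks pre c d c' d' : 2 \notin pre ->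
  minn c 2 = minn c' 2 -> (d == 0) = (d' == 0) ->
  minn (count_mem 0 pre + d) 2 = minn (count_mem 0 pre + d') 2 ->
  lam (pre ++ blocks c d) (pre ++ blocks c' d').
Proof.
move=> /count_memPn p2 Hc Hd0 Hd; apply: (lam_trans (v := pre ++ blocks c' d)).
  by apply: lam_cat_nseq; rewrite ?p2; lia.
have := @lam_cat_nseq (pre ++ nseq c' 2) [::] 0 d d' Hd0.
by rewrite !cats0 -!catA count_cat count_nseq /= mul0n addn0; apply.
Qed.

Lemma lam_nseq_min2 a n n' : lam (nseq n a) (nseq n' a) -> minn n 2 = minn n' 2.
Proof.
case=> /tau1_mem /(_ a) Hmem /(_ a) Hm _; move: Hmem Hm.
rewrite /multiple !mem_nseq !count_nseq /= eqxx !mul1n !andbT; lia.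
Qed.

Lemma lam_t_prefix a i n j : a <= 1 ->
  lam (nseq a 0 ++ 1 :: nseq i 0) (nseq n 0 ++ 1 :: nseq j 0) -> n = a.
Proof.
move=> a1 [/tau1_ohead Ht /(_ 0) Hm Ha].
case: a a1 Ht Hm Ha => [|[|//]] _; first by case: n.
case: n => [|[|n]] // _ Hm /(_ 0); rewrite Hm /multiple /first_two_adj //=.
by move/(_ isT).
Qed.

Definition xty2x : word := [:: 0; 1; 2; 2; 0].
Definition xtx : word := [:: 0; 1; 0].

Lemma lam_xty2x_shape w : lam xty2x w ->
  exists k m, w = 0 :: 1 :: blocks k.+2 m.+1.
Proof.
case=> /tau1P Ht.
have /tau1_nf_cons [a [w1 [-> /tau1_nf_cons [b [w2 [-> Hnf]]]]]] :
  tau1_nf w = [:: 0; 1; 2; 0] by rewrite -Ht.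
move: Hnf => /tau1_nf_cons [c [w3 [-> /tau1_nf_cons [d [w4 [-> /tau1_nf_nil ->]]]]]].
move=> /[dup] /(_ 1) + /(_ 2) + /(_ 0 isT).
rewrite /multiple /first_two_adj !count_cat !count_nseq cats0 /=.
case: b => [|b]; last lia; case: c => [|c]; first lia.
by case: a => [|a] //= *; exists c, d.
Qed.

Lemma lam_xty2x_blocks c d : 1 < c -> 0 < d -> lam xty2x (0 :: 1 :: blocks c d).
Proof.
by move=> c2 d1; apply: (lam_blocks (pre := [:: 0; 1]) (c := 2) (d := 1)) => //=; lia.
Qed.

(** * Identities of M_λ(xtx) *)

Lemma allowed_infix Wl p w s : allowed Wl (p ++ w ++ s) -> allowed Wl w.
Proof.
case=> x Hx [p' [s' Hl]]; exists x => //; exists (p' ++ p), (s ++ s').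
by move: Hl; rewrite -!catA.
Qed.

Lemma allowed_xt_nseq n : allowed [:: xtx] (0 :: 1 :: nseq n 0).
Proof.
exists xtx; rewrite ?inE //; case: n => [|n]; first by exists [::], [:: 0]; apply: lam_refl.
exists [::], [::]; rewrite cats0.
by have := @lam_cat_nseq [:: 0; 1] [::] 0 1 n.+1 erefl; rewrite !cats0 /=; apply; lia.
Qed.

Lemma allowed_nseq n : allowed [:: xtx] (nseq n 0).
Proof.
by apply: (@allowed_infix _ [:: 0; 1] _ [::]); rewrite cats0; apply: allowed_xt_nseq.
Qed.

Lemma allowed_t_nseq a n : a <= 1 -> allowed [:: xtx] (nseq a 0 ++ 1 :: nseq n 0).
Proof.
move=> a1; apply: (@allowed_infix _ (nseq (1 - a) 0) _ [::]).
by rewrite cats0 catA -nseqD subnK //; apply: allowed_xt_nseq.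
Qed.

Definition substw (h : nat -> word) (u : word) : word := flatten [seq h c | c <- u].

Lemma substw_cat h u v : substw h (u ++ v) = substw h u ++ substw h v.
Proof. by rewrite /substw map_cat flatten_cat. Qed.

(* The identity u ≈ v, checked in M_λ(Wl) only on the assignments that send no
   letter to zero and give u a nonzero value. *)
Definition Mlam_total_sat (Wl : seq word) (u v : word) : Prop :=
  forall h : nat -> word, allowed Wl (substw h u) -> lam (substw h u) (substw h v).

Lemma img_substw s0 h w :
  img (fun c => Some (substw h (odflt [::] (s0 c)))) w = substw h (img s0 w).
Proof. by elim: w => //= c w IH; rewrite /img /= substw_cat -IH. Qed.

Lemma Mlam_sat_total Wl u v s0 :
  Mlam_sat Wl (u, v) -> Mlam_total_sat Wl (img s0 u) (img s0 v).
Proof.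
move=> H h Hal; case: (H (fun c => Some (substw h (odflt [::] (s0 c))))).
  by case=> Hu _; exfalso; apply: Hu; split=> //=; rewrite img_substw.
by case=> _ _ /=; rewrite !img_substw.
Qed.

Definition count_min2_eq (u v : word) : Prop :=
  forall c, minn (count_mem c u) 2 = minn (count_mem c v) 2.

Definition mark (e c : nat) : word := if c == e then [:: 0] else [::].

Lemma substw_mark e w : substw (mark e) w = nseq (count_mem e w) 0.
Proof. by elim: w => //= c w IH; rewrite /substw /= -/(substw _ w) IH /mark; case: eqP. Qed.

Lemma Mlam_total_count_min2 W W' : Mlam_total_sat [:: xtx] W W' -> count_min2_eq W W'.
Proof.
move=> H c; apply: (@lam_nseq_min2 0); rewrite -!substw_mark.
by apply: H; rewrite substw_mark; apply: allowed_nseq.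
Qed.

Lemma all_mem_count_min2 (L : seq nat) W W' :
  count_min2_eq W W' -> all (mem L) W -> all (mem L) W'.
Proof.
move=> Hc /allP HW; apply/allP => c cW'; apply: contraT => cL.
have /count_memPn c0 : c \notin W by apply: contra cL => /HW.
have : 0 < count_mem c W' by rewrite -has_count has_pred1.
by move: (Hc c); rewrite c0; lia.
Qed.

Lemma count_min2_eq_small W W' : count_min2_eq W W' -> size W <= 1 -> W' = W.
Proof.
move=> Hc sW; apply: (perm_small_eq sW); apply/allP => c _; apply/eqP.
have : count_mem c W <= size W := count_size _ _.
by move: (Hc c); lia.
Qed.

Definition mark_t (e c : nat) : word := if c == 1 then [:: 1] else mark e c.

Lemma substw_mark_t e A B : 1 \notin A -> 1 \notin B ->
  substw (mark_t e) (A ++ 1 :: B) = nseq (count_mem e A) 0 ++ 1 :: nseq (count_mem e B) 0.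
Proof.
have mark_tE w : 1 \notin w -> substw (mark_t e) w = nseq (count_mem e w) 0.
  rewrite -substw_mark; elim: w => //= c w IH; rewrite inE negb_or => /andP [c1 /IH].
  by rewrite /substw /= => ->; rewrite /mark_t eq_sym (negbTE c1).
by move=> /mark_tE A1 /mark_tE B1; rewrite substw_cat A1 /substw /= -/(substw _ B) B1.
Qed.

Lemma xtx_t_prefix a W2 W' : a <= 1 -> all (mem [:: 0; 2]) W2 ->
  Mlam_total_sat [:: xtx] (nseq a 0 ++ 1 :: W2) W' ->
  exists2 B, W' = nseq a 0 ++ 1 :: B & all (mem [:: 0; 2]) B.
Proof.
move=> a1 HW2 HW; have Hc := Mlam_total_count_min2 HW.
have W21 : 1 \notin W2 by apply/negP => /(allP HW2).
have HW' : all (mem [:: 0; 1; 2]) W'.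
  apply: all_mem_count_min2 Hc _; rewrite all_cat all_nseq /= orbT /=.
  by apply/allP => c /(allP HW2); rewrite !inE => /orP [] ->; rewrite ?orbT.
have c1 : count_mem 1 W' = 1.
  by move: (Hc 1); rewrite count_cat count_nseq /= (count_memPn W21); lia.
have W'1 : 1 \in W' by rewrite -has_pred1 has_count c1.
move: HW HW' c1; case/splitPr: W'1 => A B; rewrite count_cat /= => HW HW' c1.
have [/count_memPn A1 /count_memPn B1] : count_mem 1 A = 0 /\ count_mem 1 B = 0.
  by move: c1 => /=; lia.
have drop1 w : all (mem [:: 0; 1; 2]) w -> 1 \notin w -> all (mem [:: 0; 2]) w.
  move=> /allP Hw w1; apply/allP => c cw; have nc1 : c != 1 by apply: contraNneq w1 => <-.
  by move: (Hw c cw); rewrite !inE (negbTE nc1).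
move: HW'; rewrite all_cat /= => /andP [/drop1 /(_ A1) HA /drop1 /(_ B1) HB].
have cnt e : count_mem e A = count_mem e (nseq a 0).
  have ae : count_mem e (nseq a 0) <= 1 by rewrite count_nseq; case: (0 == e); lia.
  apply: (lam_t_prefix (i := count_mem e W2) (j := count_mem e B) ae).
  have := HW (mark_t e); rewrite !substw_mark_t // ?mem_nseq ?andbF //.
  by apply; apply: allowed_t_nseq.
have EA : A = nseq (size A) 0.
  apply/all_pred1P/allP => c cA; move: (allP HA c cA) (cnt 2); rewrite !inE.
  case/orP => [/eqP -> //| /eqP c2].
  by rewrite count_nseq /= mul0n => /count_memPn; rewrite -c2 cA.
move: (cnt 0); rewrite {1}EA !count_nseq /= !mul1n => sA.
by exists B; rewrite // EA sA.
Qed.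

Lemma infix_blocks c d : ~~ infix [:: 0; 2] (blocks c d).
Proof.
elim: c => [|c IH] //=; apply/negP => /mem_infix /(_ 2).
by rewrite !inE mem_nseq eqxx orbT andbF => /(_ isT).
Qed.

Lemma no_infix_blocks z : all (mem [:: 0; 2]) z -> ~~ infix [:: 0; 2] z ->
  z = blocks (count_mem 2 z) (count_mem 0 z).
Proof.
elim: z => [|c z IH] // /andP [Hc Hz]; rewrite infix_consl negb_or.
move=> /andP [+ /(IH Hz)]; move: Hc; rewrite !inE => /orP [] /eqP -> /= Hp Ez.
  case: (count_mem 2 z) Ez => [|n] Ez; last by move: Hp; rewrite Ez /blocks /= prefix0s.
  by rewrite {1}Ez add0n add1n.
by rewrite {1}Ez.
Qed.

Lemma infix_free_factor q V s : all (mem [:: 0; 2]) (q ++ V ++ s) ->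
  ~~ infix [:: 0; 2] (q ++ V ++ s) -> V = blocks (count_mem 2 V) (count_mem 0 V).
Proof.
rewrite !all_cat => /and3P [_ HV _] Hn; apply: no_infix_blocks HV _.
by apply: contra Hn => /infix_trans; apply; apply: infix_infix.
Qed.

Lemma all_mem_blocks c d : all (mem [:: 0; 2]) (blocks c d).
Proof. by rewrite all_cat !all_nseq !inE !eqxx !orbT. Qed.

Lemma blocks_lam_or_infix pre q V V' s k m : 2 \notin pre -> count_mem 0 pre <= 1 ->
  q ++ V ++ s = blocks k.+2 m.+1 -> all (mem [:: 0; 2]) V' ->
  count_min2_eq (pre ++ V) (pre ++ V') ->
  (lam xty2x (0 :: 1 :: q ++ V' ++ s) /\ lam (pre ++ V) (pre ++ V')) \/
  (all (mem [:: 0; 2]) (q ++ V' ++ s) && infix [:: 0; 2] (q ++ V' ++ s)).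
Proof.
move=> p2 + HT HV' Hc => /= p0.
have HT2 := all_mem_blocks k.+2 m.+1; rewrite -HT in HT2.
have Hz : all (mem [:: 0; 2]) (q ++ V' ++ s).
  by move: HT2; rewrite !all_cat HV' => /and3P [-> _ ->].
have [Hinf|Hinf] := boolP (infix [:: 0; 2] (q ++ V' ++ s)); [right | left].
  exact/andP.
have := congr1 (count_mem 2) HT; have := congr1 (count_mem 0) HT.
move: (Hc 2) (Hc 0); rewrite !count_cat !count_nseq (count_memPn p2) /=.
move=> c2 c0 n0 n2; split.
  by rewrite (no_infix_blocks Hz Hinf); apply: lam_xty2x_blocks; rewrite !count_cat /=; lia.
rewrite (infix_free_factor HT2 _) ?HT ?infix_blocks //.
rewrite [V'](infix_free_factor Hz Hinf).
apply: lam_blocks => //=; lia.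
Qed.

Lemma factor_xt_cases p W s Z : p ++ W ++ s = 0 :: 1 :: Z ->
  [\/ exists q, p = 0 :: 1 :: q, size W <= 1 |
      exists a W2, [/\ a <= 1, W = nseq a 0 ++ 1 :: W2, p ++ nseq a 0 = [:: 0] & W2 ++ s = Z]].
Proof.
case: p => [|c [|c' q]] /=; last by case=> -> -> _; apply: Or31; exists q.
  case: W => [|c [|c' W2]] /=; try by constructor 2.
  by case=> -> -> <-; apply: Or33; exists 1, W2.
case=> ->; case: W => [|c' W2] /=; first by constructor 2.
by case=> -> <-; apply: Or33; exists 0, W2.
Qed.

Lemma factor_lam_or_infix p W W' s k m :
  p ++ W ++ s = 0 :: 1 :: blocks k.+2 m.+1 -> Mlam_total_sat [:: xtx] W W' ->
  (lam xty2x (p ++ W' ++ s) /\ lam W W') \/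
  exists2 z, p ++ W' ++ s = 0 :: 1 :: z & all (mem [:: 0; 2]) z && infix [:: 0; 2] z.
Proof.
move=> HT HW; have Hc := Mlam_total_count_min2 HW.
case: (factor_xt_cases HT) => [[q Ep] | sW | [a [W2 [a1 EW Ep HT2]]]].
- move: HT; rewrite Ep /= => [[HT]].
  have HW2 : all (mem [:: 0; 2]) W.
    by move: (all_mem_blocks k.+2 m.+1); rewrite -HT !all_cat => /and3P [].
  have HW2' := all_mem_count_min2 Hc HW2.
  by case: (blocks_lam_or_infix (pre := [::]) isT isT HT HW2' Hc) => [H|H];
    [left | right; exists (q ++ W' ++ s)].
- rewrite (count_min2_eq_small Hc sW) HT; left.
  by split; [apply: lam_xty2x_blocks | apply: lam_refl].
- have HW2 : all (mem [:: 0; 2]) W2.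
    by move: (all_mem_blocks k.+2 m.+1); rewrite -HT2 all_cat => /andP [].
  rewrite EW in HW Hc; have [B EW' HB] := xtx_t_prefix a1 HW2 HW.
  have Hc' : count_min2_eq ((nseq a 0 ++ [:: 1]) ++ W2) ((nseq a 0 ++ [:: 1]) ++ B).
    by rewrite -!catA -EW'.
  have pre2 : 2 \notin nseq a 0 ++ [:: 1] by rewrite mem_cat mem_nseq andbF.
  have pre0 : count_mem 0 (nseq a 0 ++ [:: 1]) <= 1.
    by rewrite count_cat count_nseq /=; lia.
  have ET' : p ++ W' ++ s = 0 :: 1 :: B ++ s by rewrite EW' -catA catA Ep.
  rewrite ET' EW EW'; case: (blocks_lam_or_infix (q := [::]) pre2 pre0 HT2 HB Hc') => [H|H].
    by left; rewrite -!catA in H.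
  by right; exists (B ++ s).
Qed.

Lemma K_failure_infix u v s0 :
  Mlam_sat [:: xtx] (u, v) -> nonzero [:: xty2x] s0 u ->
  ~ (nonzero [:: xty2x] s0 v /\ lam (img s0 u) (img s0 v)) ->
  exists p s k m z, [/\ p ++ img s0 u ++ s = 0 :: 1 :: blocks k.+2 m.+1,
    p ++ img s0 v ++ s = 0 :: 1 :: z, all (mem [:: 0; 2]) z & infix [:: 0; 2] z].
Proof.
move=> Huv [Hu [x]]; rewrite inE => /eqP -> [p [s /lam_xty2x_shape [k [m HT]]]] Hfail.
have := factor_lam_or_infix HT (Mlam_sat_total (s0 := s0) Huv).
case=> [[HX Hl] | [z Ez /andP [Hz Hinf]]]; last by exists p, s, k, m, z.
exfalso; apply: Hfail; split=> //; split; last by exists xty2x; rewrite ?inE //; exists p, s.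
(* No letter of v is sent to zero, as u and v have the same content. *)
have := Mlam_total_count_min2 (Mlam_sat_total (s0 := fun c => Some [:: c]) Huv).
rewrite /img /= !flatten_seq1 => Hc c cv; apply: Hu.
have : 0 < count_mem c v by rewrite -has_count has_pred1.
by rewrite -has_pred1 has_count; move: (Hc c); lia.
Qed.

(** * Identities of monoids satisfying xtx ≈ xtx² *)

Section Identities.

Variable M : monoid.

Lemma meval_cat (e : nat -> M) u v : meval e (u ++ v) = mop (meval e u) (meval e v).
Proof. by elim: u => [|c u IH] /=; rewrite ?mop1m // IH mopA. Qed.

Lemma meval_substw (e : nat -> M) h u :
  meval e (substw h u) = meval (fun c => meval e (h c)) u.
Proof. by elim: u => //= c u <-; rewrite /substw /= meval_cat. Qed.

Lemma msat_sym u v : msat M (u, v) -> msat M (v, u).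
Proof. by move=> H e; rewrite H. Qed.

Lemma msat_trans v u w : msat M (u, v) -> msat M (v, w) -> msat M (u, w).
Proof. by move=> H1 H2 e; rewrite H1 H2. Qed.

Lemma msat_ctx p s u v : msat M (u, v) -> msat M (p ++ u ++ s, p ++ v ++ s).
Proof. by move=> H e; rewrite /= !meval_cat (H e). Qed.

Lemma msat_substw h u v : msat M (u, v) -> msat M (substw h u, substw h v).
Proof. by move=> H e; rewrite /= !meval_substw (H _). Qed.

Hypothesis Hxtx : msat M (xtx, [:: 0; 1; 0; 0]).

Lemma msat_xtx a t : msat M (a ++ t ++ a, a ++ t ++ a ++ a).
Proof.
have := msat_substw (fun c => if c == 0 then a else t) Hxtx.
by rewrite /substw /= !cats0.
Qed.

Lemma msat_tau1 P u u' : all (mem P) u -> tau1 u u' -> msat M (P ++ u, P ++ u').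
Proof.
move=> + H; elim: H => [w _ e //|x y Hxy IH|x y z Hxy IH1 _ IH2|p s a] /allP HP.
- by apply/msat_sym/IH/allP => c; rewrite (tau1_mem Hxy) => /HP.
- apply: msat_trans (IH1 (introT allP HP)) (IH2 _).
  by apply/allP => c; rewrite -(tau1_mem Hxy) => /HP.
have := HP a; rewrite mem_cat inE eqxx orbT => /(_ isT) /splitPr [P1 P2].
by have := msat_ctx P1 s (msat_xtx [:: a] (P2 ++ p)); rewrite -!catA.
Qed.

Lemma msat_power2 P w n : msat M (P ++ flatten (nseq n.+2 w), P ++ w ++ w).
Proof.
elim: n => [|n IH]; first by rewrite /= cats0.
apply: msat_trans IH; have := msat_ctx P (flatten (nseq n w)) (msat_sym (msat_xtx w [::])).
by rewrite /= -!catA.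
Qed.

Lemma msat_blocks_xty2x k m : msat M (0 :: 1 :: blocks k.+2 m.+1, xty2x).
Proof.
apply: (@msat_tau1 [:: 0; 1; 2] (nseq k.+1 2 ++ nseq m.+1 0) [:: 2; 0]).
  by rewrite all_cat !all_nseq !inE !eqxx !orbT.
apply: tau1_trans (tau1_nseq 2 k _) _.
by have := tau1_ctx [:: 2] [::] (tau1_nseq 0 m [::]); rewrite !cats0.
Qed.

Lemma msat_xty2x_tail z : all (mem [:: 0; 2]) z ->
  msat M (xty2x, 0 :: 1 :: z) -> msat M (xty2x, [:: 0; 1; 2; 2] ++ z ++ [:: 0]).
Proof.
move=> Hz H; pose h c := if c == 1 then [:: 1; 2; 2] else [:: c].
have Ehz : substw h z = z.
  rewrite /substw -[RHS]flatten_seq1; congr flatten; apply/eq_in_map => c /(allP Hz).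
  by rewrite /h !inE => /orP [] /eqP ->.
apply: (msat_trans (msat_xtx [:: 0] [:: 1; 2; 2])).
apply: (msat_trans (v := [:: 0; 1; 2; 2; 2; 2; 0; 0])).
  by apply: (@msat_tau1 [:: 0; 1; 2] [:: 2; 0; 0]) => //; apply/tau1P.
by have := msat_ctx [::] [:: 0] (msat_substw h H); rewrite /= -/(substw h z) Ehz.
Qed.

Lemma msat_yx_power p q : all (mem [:: 2; 0]) p -> all (mem [:: 2; 0]) q ->
  msat M ([:: 0; 1; 2] ++ (2 :: p ++ [:: 0]) ++ (2 :: q ++ [:: 0]), [:: 0; 1; 2; 2; 0; 2; 0]).
Proof.
move=> Hp Hq; have [i Hi] := tau1_alternate Hp; have [j Hj] := tau1_alternate Hq.
apply: (msat_trans (v := [:: 0; 1; 2] ++ flatten (nseq (i + j).+2 [:: 2; 0]))).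
  apply: msat_tau1.
    apply: (sub_all (a1 := mem [:: 2; 0])); last by rewrite all_cat /= !all_cat Hp Hq.
    by move=> c; rewrite !inE => /orP [] ->; rewrite ?orbT.
  apply: tau1_trans (tau1_ctx [::] _ Hi) _.
  have -> : (i + j).+2 = i.+1 + j.+1 by lia.
  rewrite nseqD flatten_cat.
  by have := tau1_ctx (flatten (nseq i.+1 [:: 2; 0])) [::] Hj; rewrite !cats0.
exact: msat_power2.
Qed.

Lemma msat_xty2x_xyx_of_infix z : all (mem [:: 0; 2]) z -> infix [:: 0; 2] z ->
  msat M (xty2x, 0 :: 1 :: z) -> msat M (xty2x, [:: 0; 1; 2; 2; 0; 2; 0]).
Proof.
move=> Hz Hinf /(msat_xty2x_tail Hz) H; apply: msat_trans H _.
case/infixP: Hinf Hz => p [q ->]; rewrite !all_cat => /and3P [Hp _ Hq].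
have sw : subpred (mem [:: 0; 2]) (mem [:: 2; 0]) by move=> c; rewrite !inE orbC.
have := msat_yx_power (sub_all sw Hp) (sub_all sw Hq).
by rewrite /= -!catA.
Qed.

Lemma msat_xty2x_of_K_failure u v s0 :
  msat M (u, v) -> Mlam_sat [:: xtx] (u, v) -> nonzero [:: xty2x] s0 u ->
  ~ (nonzero [:: xty2x] s0 v /\ lam (img s0 u) (img s0 v)) ->
  msat M (xty2x, [:: 0; 1; 2; 2; 0; 2; 0]).
Proof.
move=> Huv Hl Hu Hf; have [p [s [k [m [z [HT HT' Hz Hinf]]]]]] := K_failure_infix Hl Hu Hf.
apply: (msat_xty2x_xyx_of_infix Hz Hinf).
apply: msat_trans (msat_sym (msat_blocks_xty2x k m)) _.
by rewrite -HT -HT'; apply: msat_ctx; apply: (msat_substw (fun c => odflt [::] (s0 c))).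
Qed.

End Identities.

Lemma Mlam_sat_sym Wl u v : Mlam_sat Wl (u, v) -> Mlam_sat Wl (v, u).
Proof.
move=> H s0; case: (H s0) => [[Hu Hv] | [Hu Hv Hl]]; [left | right] => //.
by split=> //; apply: lam_sym.
Qed.

Lemma Mlam_sat_failure Wl u v : ~ Mlam_sat Wl (u, v) -> exists s0,
  (nonzero Wl s0 u /\ ~ (nonzero Wl s0 v /\ lam (img s0 u) (img s0 v))) \/
  (nonzero Wl s0 v /\ ~ (nonzero Wl s0 u /\ lam (img s0 v) (img s0 u))).
Proof.
move/not_all_ex_not => [s0 Hs0]; exists s0.
have [Hu|Hu] := classic (nonzero Wl s0 u).
  by left; split=> // [[Hv Hl]]; apply: Hs0; right.
have [Hv|Hv] := classic (nonzero Wl s0 v); last by case: Hs0; left.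
by right; split=> // [[]].
Qed.

Theorem lemma4p3 (Sigma : identity -> Prop) :
  Vsat Sigma ([:: 0; 1; 0], [:: 0; 1; 0; 0]) ->
  Vcontains_Mlam Sigma [:: [:: 0; 1; 0]] ->
  ~ Vcontains_Mlam Sigma [:: [:: 0; 1; 2; 2; 0]] ->
  Vsat Sigma ([:: 0; 1; 2; 2; 0], [:: 0; 1; 2; 2; 0; 2; 0]).
Proof.
move=> Hxtx Hxtx_in HK M HM.
have [[u v] He Hf] : exists2 e, Sigma e & ~ Mlam_sat [:: xty2x] e.
  by apply: NNPP => Hn; apply: HK => e He; apply: NNPP => He'; apply: Hn; exists e.
have := Hxtx M HM; have := HM _ He; have := Hxtx_in _ He.
case: (Mlam_sat_failure Hf) => s0 [[Hu Hv] | [Hv Hu]] Hl Huv Hx.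
  exact: (msat_xty2x_of_K_failure Hx Huv Hl Hu Hv).
exact: (msat_xty2x_of_K_failure Hx (msat_sym Huv) (Mlam_sat_sym Hl) Hv Hu).
Qed.
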